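(* Let $k\ge 2$ be an integer. Every $k$-automatic sequence is strongly $k$-recursive.
   Context: A sequence $(f(n))_{n\ge0}$ is $k$-automatic if there is a deterministic finite automaton with output which, on input the base-$k$ representation of $n$, reaches a state whose output is $f(n)$. A sequence $(f(n))_{n\ge 0}$ is strongly $k$-recursive if there exist natural numbers $r<t$ such that for every $b$ with $0\le b<k^t$, the sequence $(f(k^t n+b))_{n\ge 0}$ is a (finite) linear combination, with constant coefficients, of the sequences $(f(k^r n+a))_{n\ge0}$ with $0\le a<k^r$. *)

From mathcomp Require Import all_boot all_order all_algebra.
Set Implicit Arguments. Unset Strict Implicit. Unset Printing Implicit Defensive.
Import GRing.Theory.
Local Open Scope ring_scope.

(* Base-k digits of n, least significant first (n = 0 gives the empty word).
   The fuel n suffices since n %/ k < n for k >= 2 and n > 0. *)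
Fixpoint base_rev_digits (k fuel n : nat) : seq nat :=
  match fuel with
  | 0 => [::]
  | fuel'.+1 => if n == 0%N then [::] else (n %% k)%N :: base_rev_digits k fuel' (n %/ k)
  end.

Definition base_digits (k n : nat) : seq nat := rev (base_rev_digits k n n).

(* f is k-automatic: a DFAO (finite state set Q, initial state q0,
   transition delta, output tau) reading the base-k representation of n
   ends in a state with output f n. *)
Definition automatic (T : Type) (k : nat) (f : nat -> T) : Prop :=
  exists (Q : finType) (q0 : Q) (delta : Q -> nat -> Q) (tau : Q -> T),
    forall n : nat, f n = tau (foldl delta q0 (base_digits k n)).

Definition strongly_recursive (R : nzRingType) (k : nat) (f : nat -> R) : Prop :=
  exists r t : nat, (r < t)%N /\
    forall b : nat, (b < k ^ t)%N ->
      exists c : nat -> R, forall n : nat,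
        f (k ^ t * n + b)%N = \sum_(a < k ^ r) c a * f (k ^ r * n + a)%N.

From mathcomp Require Import all_boot all_order all_algebra.
From mathcomp Require Import zify.
Import GRing.Theory.

Set Implicit Arguments.
Unset Strict Implicit.
Unset Printing Implicit Defensive.

(* A DFAO reading canonical base-k representations is turned into one that
   reads arbitrary digit words, leading zeros included, by recording whether
   only zeros have been read so far.  The state reached on the word of
   [k^t n + b] is then the state reached on [n] followed by the length-t word
   of [b], so it depends on [b] only through a transition map of a finite
   set.  Among the finitely many sets of such maps two lengths r < t give the
   same set, hence every [f (k^t n + b)] equals some [f (k^r n + a)]. *)

Lemma exists_repeat (T : finType) (g : nat -> T) :
  exists r t, (r < t)%N /\ g r = g t.
Proof.
pose h (i : 'I_#|T|.+1) := g i.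
have /injectivePn [i [j neq_ij eq_ij]] : ~~ injectiveb h.
  by apply/injectiveP => /leq_card; rewrite card_ord ltnn.
case: (ltngtP i j) => [lt_ij|lt_ji|/val_inj eqij]; last by rewrite eqij eqxx in neq_ij.
- by exists i, j.
- by exists j, i.
Qed.

Lemma strongly_recursive_of_subsequences (R : nzRingType) k (f : nat -> R) r t :
  (r < t)%N ->
  (forall b, b < k ^ t -> exists2 a, a < k ^ r &
     forall n, f (k ^ t * n + b) = f (k ^ r * n + a))%N ->
  strongly_recursive k f.
Proof.
move=> lt_rt sub; exists r, t; split => // b /sub [a lt_a eq_f].
exists (fun i => (i == a)%:R%R) => n.
rewrite (bigD1 (Ordinal lt_a)) //= eqxx mul1r big1 ?addr0 ?eq_f // => i.
by rewrite -val_eqE /= => /negbTE ->; rewrite mul0r.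
Qed.

Section Digits.
Variable k : nat.
Hypothesis k_ge2 : (2 <= k)%N.

Definition nat_of_digits (w : seq nat) : nat :=
  foldl (fun acc d => acc * k + d)%N 0%N w.

Lemma nat_of_digits_rcons w d :
  nat_of_digits (rcons w d) = (nat_of_digits w * k + d)%N.
Proof. by rewrite /nat_of_digits foldl_rcons. Qed.

Lemma nat_of_digits_cat u v :
  nat_of_digits (u ++ v) = (nat_of_digits u * k ^ size v + nat_of_digits v)%N.
Proof.
elim/last_ind: v => [|v d IH]; first by rewrite cats0 expn0 muln1 addn0.
by rewrite -rcons_cat !nat_of_digits_rcons IH size_rcons expnSr; lia.
Qed.

(* The base-k word of length e of b, with leading zeros (b mod k^e in general). *)
Fixpoint pad_digits (e b : nat) : seq nat :=
  if e is e'.+1 then rcons (pad_digits e' (b %/ k)) (b %% k) else [::].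

Lemma size_pad_digits e b : size (pad_digits e b) = e.
Proof. by elim: e b => [|e IH] b //=; rewrite size_rcons IH. Qed.

Lemma pad_digits_lt e b : all (fun d => d < k)%N (pad_digits e b).
Proof. by elim: e b => [|e IH] b //=; rewrite all_rcons IH andbT ltn_mod; lia. Qed.

Lemma nat_of_pad_digits e b : (b < k ^ e)%N -> nat_of_digits (pad_digits e b) = b.
Proof.
elim: e b => [|e IH] b /=; first by rewrite expn0; case: b.
move=> lt_b; rewrite nat_of_digits_rcons IH -?divn_eq //.
by rewrite ltn_divLR -?expnSr //; lia.
Qed.

Lemma base_rev_digits_fuel f1 f2 n : (n <= f1)%N -> (n <= f2)%N ->
  base_rev_digits k f1 n = base_rev_digits k f2 n.
Proof.
elim: f1 f2 n => [|f1 IH] [|f2] n //=.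
- by rewrite leqn0 => /eqP ->.
- by move=> /[swap]; rewrite leqn0 => /eqP ->.
case: eqP => // /eqP n_neq0 le1 le2.
have : (n %/ k < n)%N by apply: ltn_Pdiv; lia.
by move=> lt_div; congr (_ :: _); apply: IH; lia.
Qed.

Lemma base_digits_rcons n : (0 < n)%N ->
  base_digits k n = rcons (base_digits k (n %/ k)) (n %% k).
Proof.
case: n => [//|m] _; rewrite /base_digits /= rev_cons.
have : (m.+1 %/ k < m.+1)%N by apply: ltn_Pdiv; lia.
by move=> lt_div; congr (rcons (rev _) _); apply: base_rev_digits_fuel; lia.
Qed.

Lemma base_digits_shift m d : (d < k)%N -> (0 < m * k + d)%N ->
  base_digits k (m * k + d) = rcons (base_digits k m) d.
Proof.
move=> lt_d pos; rewrite base_digits_rcons //.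
by rewrite divnMDl ?modnMDl ?divn_small ?modn_small ?addn0 //; lia.
Qed.

Section ZeroAwareAutomaton.
Variables (Q : finType) (q0 : Q) (delta : Q -> nat -> Q).

Definition zstate (n : nat) : Q * bool :=
  (foldl delta q0 (base_digits k n), n == 0%N).

Definition zdelta (s : Q * bool) (d : nat) : Q * bool :=
  if s.2 && (d == 0%N) then (q0, true) else (delta s.1 d, false).

Lemma foldl_zdelta w : all (fun d => d < k)%N w ->
  foldl zdelta (q0, true) w = zstate (nat_of_digits w).
Proof.
elim/last_ind: w => [|w d IH] //; rewrite all_rcons => /andP [lt_d lt_w].
rewrite foldl_rcons IH // nat_of_digits_rcons /zdelta /zstate /=.
set m := nat_of_digits w.
have [sum0|pos] := posnP (m * k + d).
  by have [-> ->] : m = 0%N /\ d = 0%N by lia.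
rewrite base_digits_shift // foldl_rcons.
by case: ifP => // /andP [/eqP m0 /eqP d0]; rewrite m0 d0 in pos.
Qed.

Lemma zstate_shift e n b : (b < k ^ e)%N ->
  zstate (k ^ e * n + b) = foldl zdelta (zstate n) (pad_digits e b).
Proof.
(* Read [n] as its padded word of length n (valid since n < k^n): the leading
   zeros are absorbed by [zdelta]. *)
move=> lt_b; have lt_n : (n < k ^ n)%N by apply: ltn_expl; lia.
have := @foldl_zdelta (pad_digits n n ++ pad_digits e b).
rewrite all_cat !pad_digits_lt nat_of_digits_cat foldl_cat size_pad_digits.
by rewrite !nat_of_pad_digits // foldl_zdelta ?pad_digits_lt // nat_of_pad_digits // mulnC => <-.
Qed.

Definition shift_map (e b : nat) : {ffun Q * bool -> Q * bool} :=
  [ffun s => foldl zdelta s (pad_digits e b)].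

Definition shift_maps (e : nat) : {set {ffun Q * bool -> Q * bool}} :=
  [set shift_map e b | b : 'I_(k ^ e)].

Lemma zstate_shift_map e e' b b' n : (b < k ^ e)%N -> (b' < k ^ e')%N ->
  shift_map e b = shift_map e' b' -> zstate (k ^ e * n + b) = zstate (k ^ e' * n + b').
Proof.
move=> lt_b lt_b' /(congr1 (fun F : {ffun _} => F (zstate n))).
by rewrite !ffunE !zstate_shift.
Qed.

Lemma shift_maps_subsequences r t : shift_maps r = shift_maps t ->
  forall b, (b < k ^ t)%N -> exists2 a, (a < k ^ r)%N &
    forall n, zstate (k ^ t * n + b) = zstate (k ^ r * n + a).
Proof.
move=> eq_maps b lt_b.
have : shift_map t b \in shift_maps t by apply/imsetP; exists (Ordinal lt_b).
rewrite -eq_maps => /imsetP [a _ eq_ba]; exists a => // n.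
exact: zstate_shift_map.
Qed.

End ZeroAwareAutomaton.
End Digits.

Theorem theorem2 (R : nzRingType) (k : nat) (hk : (2 <= k)%N) (f : nat -> R) :
  automatic k f -> strongly_recursive k f.
Proof.
move=> [Q [q0 [delta [tau f_eq]]]].
have [r [t [lt_rt eq_maps]]] := exists_repeat (shift_maps k q0 delta).
apply: (strongly_recursive_of_subsequences lt_rt) => b /(shift_maps_subsequences hk eq_maps).
case=> a lt_a eq_state; exists a => // n.
by rewrite !f_eq; congr tau; exact: (congr1 fst (eq_state n)).
Qed.
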